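(* A nonzero $Q(X,Y)\in M_{s,\ell}$ has minimal $(1,k-1)$-weighted degree among the nonzero elements of $M_{s,\ell}$ if and only if $\varphi(Q(X,Y))$ has minimal $(1,-1)$-weighted degree among the nonzero elements of $\varphi(M_{s,\ell})$.
   Context: Let $\mathbb F_q$ be a finite field, $1\le k<n<q$, $\alpha_0,\dots,\alpha_{n-1}$ distinct nonzero elements of $\mathbb F_q$, $w_0,\dots,w_{n-1}$ nonzero elements of $\mathbb F_q$, and $r\in\mathbb F_q^n$ a word with $r_i=0$ for $i=0,\dots,k-1$; let $r_i'=r_i/w_i$. For positive integers $s\le\ell$, $M_{s,\ell}$ is the $\mathbb F_q[X]$-module of all $Q\in\mathbb F_q[X,Y]$ of $Y$-degree at most $\ell$ such that for each $i$, $Q(X+\alpha_i,Y+r_i')$ has no monomials of total degree less than $s$. Let $L(X)=\prod_{i=0}^{k-1}(X-\alpha_i)$ and $\varphi(Q)(X,Y)=L(X)^{-s}Q(X,L(X)Y)$ for $Q\in M_{s,\ell}$ (under the assumption on $r$, $\varphi(Q)\in\mathbb F_q[X,Y]$); $\varphi(M_{s,\ell})$ is the image. For integers $u,v$, the $(u,v)$-weighted degree of a nonzero bivariate polynomial is the maximum of $ui+vj$ over its monomials $X^iY^j$. *)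

(* Bivariate polynomials Q(X,Y) are elements of
   {poly {poly F}}: the outer variable is Y, coefficients are polynomials
   in X.  The coefficient of X^i Y^j in Q is (Q`_j)`_i. *)
From HB Require Import structures.
From mathcomp Require Import all_boot all_order all_algebra all_field.
Set Implicit Arguments. Unset Strict Implicit. Unset Printing Implicit Defensive.
Import Order.TTheory GRing.Theory Num.Theory.
Local Open Scope ring_scope.

Section Defs.
Variable F : fieldType.

Definition monomial_weights (u v : int) (Q : {poly {poly F}}) : seq int :=
  flatten [seq [seq u * (i%:Z) + v * (j%:Z)
               | i <- iota 0 (size Q`_j) & (Q`_j)`_i != 0]
          | j <- iota 0 (size Q)].

(* (u,v)-weighted degree: maximum of u*i+v*j over the monomials of Q
   (meaningful for Q != 0). *)
Definition wdeg (u v : int) (Q : {poly {poly F}}) : int :=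
  let s := monomial_weights u v Q in foldr Num.max (head 0 s) s.

Definition shiftXY (a b : F) (Q : {poly {poly F}}) : {poly {poly F}} :=
  (map_poly (fun c : {poly F} => c \Po ('X + a%:P)) Q) \Po ('X + (b%:P)%:P).

Definition vanish_order (s : nat) (a b : F) (Q : {poly {poly F}}) : Prop :=
  forall i j : nat, (i + j < s)%N -> ((shiftXY a b Q)`_j)`_i = 0.

(* membership in M_{s,l} ; rp i stands for r'_i = r_i / w_i *)
Definition inM (n s l : nat) (alpha rp : 'I_n -> F) (Q : {poly {poly F}}) : Prop :=
  (size Q <= l.+1)%N /\ forall i : 'I_n, vanish_order s (alpha i) (rp i) Q.

Definition Lpoly (n k : nat) (alpha : 'I_n -> F) : {poly F} :=
  \prod_(i < n | (i < k)%N) ('X - (alpha i)%:P).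

(* phi(Q) = L(X)^{-s} Q(X, L(X) Y); the division is exact on M_{s,l}. *)
Definition phi (L : {poly F}) (s : nat) (Q : {poly {poly F}}) : {poly {poly F}} :=
  map_poly (fun c : {poly F} => c %/ L ^+ s) (Q \Po (L%:P * 'X)).

End Defs.

(* Since r_i = 0 for i < k, the conditions defining M_{s,l} at the points
   (alpha_i, 0) say that alpha_i is a root of multiplicity at least s - j of
   the Y^j-coefficient R_j of every R in M_{s,l}; the alpha_i being distinct,
   L^{s-j} divides R_j.  Hence phi(R)_j = R_j L^{j-s} is an exact quotient of
   degree deg R_j + k(j - s), and the (1,-1)-weighted degree of phi(R) is the
   (1,k-1)-weighted degree of R shifted by the constant -ks.  Since moreover
   phi(R) = 0 only for R = 0, minimality is preserved and reflected. *)

From HB Require Import structures.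
From mathcomp Require Import all_boot all_order all_algebra all_field.
From mathcomp Require Import zify.

Set Implicit Arguments.
Unset Strict Implicit.
Unset Printing Implicit Defensive.
Import Order.TTheory GRing.Theory Num.Theory.
Local Open Scope ring_scope.

Lemma ltn_size_coef_neq0 {R : nzSemiRingType} (p : {poly R}) i :
  p`_i != 0 -> (i < size p)%N.
Proof. by rewrite ltnNge; apply: contra => h; rewrite nth_default. Qed.

Lemma foldr_max_ge {R : realDomainType} (a : R) (t : seq R) x :
  x \in a :: t -> x <= foldr Num.max a t.
Proof.
elim: t x => [|y t IH] x; first by rewrite mem_seq1 => /eqP ->.
rewrite /= le_max !in_cons => /or3P [/eqP->|/eqP->|hx].
- by rewrite IH ?mem_head ?orbT.
- by rewrite lexx.
- by rewrite IH ?orbT // in_cons hx orbT.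
Qed.

Lemma foldr_max_mem {R : realDomainType} (a : R) (t : seq R) :
  foldr Num.max a t \in a :: t.
Proof.
elim: t => [|y t IH] /=; first by rewrite mem_head.
case: leP => _; last by rewrite !in_cons eqxx orbT.
by move: IH; rewrite !in_cons => /orP [->|->]; rewrite ?orbT.
Qed.

Lemma foldr_max_head_mem {R : realDomainType} (t : seq R) :
  t != [::] -> foldr Num.max (head 0 t) t \in t.
Proof. by case: t => // x t _ /=; case: leP => _; rewrite ?foldr_max_mem ?mem_head. Qed.

Section WeightedDegree.
Variable F : fieldType.
Implicit Types (P Q : {poly {poly F}}) (u v w c : int).

Lemma mem_monomial_weights u v Q x :
  x \in monomial_weights u v Q <->
  exists j i, (Q`_j)`_i != 0 /\ x = u * i%:Z + v * j%:Z.
Proof.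
split=> [/flattenP [t /mapP [j _ ->] /mapP [i]]|[j [i [nzi ->]]]].
  by rewrite mem_filter => /andP [nzi _] ->; exists j, i.
have nzj : Q`_j != 0 by apply: contraNneq nzi => ->; rewrite coef0.
apply/flattenP; eexists.
  by apply/mapP; exists j; rewrite ?mem_iota ?ltn_size_coef_neq0.
by apply/mapP; exists i; rewrite // mem_filter nzi mem_iota ltn_size_coef_neq0.
Qed.

Lemma le_wdeg u v Q j i : (Q`_j)`_i != 0 -> u * i%:Z + v * j%:Z <= wdeg u v Q.
Proof.
move=> nzi; apply: foldr_max_ge; rewrite in_cons; apply/orP; right.
by apply/(mem_monomial_weights u v Q); exists j, i.
Qed.

Lemma wdeg_attained u v Q : Q != 0 ->
  exists j i, (Q`_j)`_i != 0 /\ wdeg u v Q = u * i%:Z + v * j%:Z.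
Proof.
move=> nzQ; rewrite /wdeg; set t := monomial_weights u v Q.
have nzlc : (lead_coef Q)`_(size (lead_coef Q)).-1 != 0.
  by rewrite -lead_coefE lead_coef_eq0 lead_coef_eq0.
have : u * (size (lead_coef Q)).-1%:Z + v * (size Q).-1%:Z \in t.
  by apply/(mem_monomial_weights u v Q); do 2!eexists; split; first exact: nzlc.
move=> ht; have /foldr_max_head_mem : t != [::] by case: t ht.
by move/(mem_monomial_weights u v Q).
Qed.

Lemma wdeg1_ge_size v Q j :
  Q`_j != 0 -> (size Q`_j).-1%:Z + v * j%:Z <= wdeg 1 v Q.
Proof. by move=> nzj; rewrite -[_.-1%:Z]mul1r le_wdeg // -lead_coefE lead_coef_eq0. Qed.

Lemma wdeg1_attained v Q : Q != 0 ->
  exists2 j, Q`_j != 0 & wdeg 1 v Q = (size Q`_j).-1%:Z + v * j%:Z.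
Proof.
case/(wdeg_attained 1 v) => j [i [nzi def_d]].
have nzj : Q`_j != 0 by apply: contraNneq nzi => ->; rewrite coef0.
exists j => //; apply: le_anti; rewrite wdeg1_ge_size // andbT def_d mul1r lerD2r.
by have := ltn_size_coef_neq0 nzi; lia.
Qed.

Lemma wdeg1_transfer v w c P Q : Q != 0 ->
  (forall j, (P`_j == 0) = (Q`_j == 0)) ->
  (forall j, Q`_j != 0 -> (size P`_j)%:Z + w * j%:Z = (size Q`_j)%:Z + v * j%:Z - c) ->
  wdeg 1 w P = wdeg 1 v Q - c.
Proof.
move=> nzQ supp sizes.
have nzP : P != 0.
  have : P`_(size Q).-1 != 0 by rewrite supp -lead_coefE lead_coef_eq0.
  by apply: contraNneq => ->; rewrite coef0.
have sizeE (p : {poly F}) : p != 0 -> (size p).-1%:Z = (size p)%:Z - 1.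
  by move=> nzp; rewrite predn_int // lt0n size_poly_eq0.
apply: le_anti; apply/andP; split.
  have [j nzPj ->] := wdeg1_attained w nzP; have nzQj : Q`_j != 0 by rewrite -supp.
  have := wdeg1_ge_size v nzQj; rewrite !sizeE //; have := sizes j nzQj; lia.
have [j nzQj ->] := wdeg1_attained v nzQ; have nzPj : P`_j != 0 by rewrite supp.
have := wdeg1_ge_size w nzPj; rewrite !sizeE //; have := sizes j nzQj; lia.
Qed.

End WeightedDegree.

Section Divisibility.
Variable F : fieldType.
Implicit Types (p : {poly F}) (a : F) (m : nat).

Lemma dvdp_Xn_coef0 p m : (forall i, (i < m)%N -> p`_i = 0) -> 'X^m %| p.
Proof.
move=> low; rewrite /dvdp -Pdiv.IdomainMonic.take_poly_modp; apply/eqP/polyP => i.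
by rewrite coef_take_poly coef0; case: ifP => // /low.
Qed.

Lemma dvdp_XsubCn_shift p a m : 'X^m %| p \Po ('X + a%:P) -> ('X - a%:P) ^+ m %| p.
Proof.
case/dvdpP => q shifted_p; rewrite -(comp_polyXaddC_K p a) shifted_p.
by rewrite comp_polyM comp_Xn_poly dvdp_mull.
Qed.

Lemma dvdp_prod_XsubCn (I : eqType) (r : seq I) (b : I -> F) m p :
  uniq (map b r) -> {in r, forall i, ('X - (b i)%:P) ^+ m %| p} ->
  \prod_(i <- r) ('X - (b i)%:P) ^+ m %| p.
Proof.
elim: r => [|x r IH] /=; first by rewrite big_nil dvd1p.
case/andP => bx_notin uniq_r dvd_p; rewrite big_cons Gauss_dvdp.
  by rewrite dvd_p ?mem_head // IH // => i ri; rewrite dvd_p // in_cons ri orbT.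
apply: coprimep_expl; rewrite coprimep_sym coprimep_XsubC rootE horner_prod.
rewrite prodf_seq_neq0; apply/allP => i ri /=.
rewrite horner_exp hornerXsubC expf_eq0 subr_eq0 negb_and; apply/orP; right.
by apply: contra bx_notin => /eqP ->; exact: map_f.
Qed.

Lemma vanish_order_dvdp s a (R : {poly {poly F}}) j :
  vanish_order s a 0 R -> ('X - a%:P) ^+ (s - j) %| R`_j.
Proof.
move=> vanish; apply/dvdp_XsubCn_shift/dvdp_Xn_coef0 => i lt_i.
have := vanish i j; rewrite /shiftXY !polyC0 addr0 comp_polyXr.
by rewrite coef_map_id0 ?comp_poly0 //; apply; lia.
Qed.

Lemma size_Lpoly n k (alpha : 'I_n -> F) : (k <= n)%N -> size (Lpoly k alpha) = k.+1.
Proof.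
move=> le_kn; rewrite /Lpoly size_prod; last by move=> i _; rewrite polyXsubC_eq0.
under eq_bigr => i _ do rewrite size_XsubC.
rewrite -(big_ord_widen n (fun _ => 2%N)) // sum_nat_const card_ord.
by rewrite -sum1_card -(big_ord_widen n (fun _ => 1%N)) // sum1_card card_ord; lia.
Qed.

Lemma Lpoly_dvdp_coef n k (alpha : 'I_n -> F) s (R : {poly {poly F}}) :
  injective alpha -> (forall i : 'I_n, (i < k)%N -> vanish_order s (alpha i) 0 R) ->
  forall j, Lpoly k alpha ^+ (s - j) %| R`_j.
Proof.
move=> inj_alpha vanish j; rewrite /Lpoly -prodrXl -big_filter.
apply: dvdp_prod_XsubCn => [|i].
  by rewrite map_inj_uniq ?filter_uniq ?index_enum_uniq.
by rewrite mem_filter => /andP [lt_ik _]; apply/vanish_order_dvdp/vanish.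
Qed.

End Divisibility.

Lemma coef_comp_CX {R : comNzRingType} (c : R) (p : {poly R}) j :
  (p \Po (c%:P * 'X))`_j = p`_j * c ^+ j.
Proof.
rewrite coef_comp_poly.
under eq_bigr => i _ do rewrite exprMn -rmorphXn coefCM coefXn.
have [lt_jp|le_pj] := ltnP j (size p); last first.
  rewrite nth_default // mul0r big1 // => i _.
  by case: eqP => [ji|]; rewrite ?mulr0 //; move: (ltn_ord i); rewrite -ji ltnNge le_pj.
rewrite (bigD1 (Ordinal lt_jp)) //= eqxx mulr1 big1 ?addr0 // => i ne_ij.
by rewrite eq_sym -(inj_eq val_inj) /= in ne_ij; rewrite (negbTE ne_ij) !mulr0.
Qed.

Section Phi.
Variables (F : fieldType) (L : {poly F}) (s : nat).
Hypothesis nzL : L != 0.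
Implicit Type R : {poly {poly F}}.

Lemma coef_phi R j : (phi L s R)`_j = (R`_j * L ^+ j) %/ L ^+ s.
Proof. by rewrite /phi coef_map_id0 ?div0p // coef_comp_CX. Qed.

Lemma coef_phiK R j : L ^+ (s - j) %| R`_j -> (phi L s R)`_j * L ^+ s = R`_j * L ^+ j.
Proof. by rewrite -dvdp_exp_sub // coef_phi => /divpK. Qed.

Lemma coef_phi_eq0 R j : L ^+ (s - j) %| R`_j -> ((phi L s R)`_j == 0) = (R`_j == 0).
Proof.
move/coef_phiK/(congr1 (fun q => q == 0)).
by rewrite !mulf_eq0 !expf_eq0 (negbTE nzL) !andbF !orbF.
Qed.

Lemma size_coef_phi R j : L ^+ (s - j) %| R`_j -> R`_j != 0 ->
  (size ((phi L s R)`_j)%R + (size L).-1 * s = size (R`_j)%R + (size L).-1 * j)%N.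
Proof.
move=> dvd_Rj nzRj; have nz_phij : (phi L s R)`_j != 0 by rewrite coef_phi_eq0.
have pos_Ln m : (0 < size (L ^+ m))%N by rewrite size_poly_gt0 expf_neq0.
have := congr1 (fun q : {poly F} => size q) (coef_phiK dvd_Rj).
rewrite /= !size_mul ?expf_neq0 // -(prednK (pos_Ln s)) -(prednK (pos_Ln j)).
by rewrite !addnS /= !size_exp.
Qed.

Lemma phi_eq0 R : (forall j, L ^+ (s - j) %| R`_j) -> (phi L s R == 0) = (R == 0).
Proof.
move=> dvd_R; apply/eqP/eqP => [/polyP phi0|->].
  by apply/polyP => j; apply/eqP; rewrite coef0 -coef_phi_eq0 // phi0 coef0.
by rewrite /phi comp_poly0 map_poly0.
Qed.

Lemma wdeg_phi d R : size L = d.+1 -> (forall j, L ^+ (s - j) %| R`_j) -> R != 0 ->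
  wdeg 1 (-1) (phi L s R) = wdeg 1 (d%:Z - 1) R - (d * s)%N%:Z.
Proof.
move=> sizeL dvd_R nzR; apply: wdeg1_transfer => // [j|j nzRj].
  exact: coef_phi_eq0.
by have := size_coef_phi (dvd_R j) nzRj; rewrite sizeL /=; lia.
Qed.

End Phi.

Lemma inM_Lpoly_dvdp_coef (F : fieldType) n k s l (alpha rp : 'I_n -> F) R :
  injective alpha -> (forall i : 'I_n, (i < k)%N -> rp i = 0) ->
  inM s l alpha rp R -> forall j, Lpoly k alpha ^+ (s - j) %| R`_j.
Proof.
move=> inj_alpha rp0 [_ vanish]; apply: Lpoly_dvdp_coef => // i lt_ik.
by rewrite -(rp0 i lt_ik).
Qed.

Theorem corollary4 (F : finFieldType) (k n : nat)
    (alpha w r : 'I_n -> F) (s l : nat)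
    (Hk : (1 <= k)%N) (Hkn : (k < n)%N) (Hnq : (n < #|F|)%N)
    (Halpha_inj : injective alpha) (Halpha0 : forall i, alpha i != 0)
    (Hw0 : forall i, w i != 0)
    (Hr0 : forall i : 'I_n, (i < k)%N -> r i = 0)
    (Hs : (0 < s)%N) (Hsl : (s <= l)%N)
    (Q : {poly {poly F}}) (HQ0 : Q != 0)
    (HQM : inM s l alpha (fun i => r i / w i) Q) :
  let rp := fun i => r i / w i in
  let L := Lpoly k alpha in
  (forall P : {poly {poly F}}, P != 0 -> inM s l alpha rp P ->
      wdeg 1 (k%:Z - 1) Q <= wdeg 1 (k%:Z - 1) P)
  <->
  (forall P : {poly {poly F}}, P != 0 ->
      (exists2 R : {poly {poly F}}, inM s l alpha rp R & P = phi L s R) ->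
      wdeg 1 (-1) (phi L s Q) <= wdeg 1 (-1) P).
Proof.
move=> rp L.
have sizeL : size L = k.+1 := size_Lpoly alpha (ltnW Hkn).
have nzL : L != 0 by rewrite -size_poly_eq0 sizeL.
have dvdM R : inM s l alpha rp R -> forall j, L ^+ (s - j) %| R`_j.
  by apply: inM_Lpoly_dvdp_coef => // i lt_ik; rewrite /rp Hr0 ?mul0r.
have wdegM R : inM s l alpha rp R -> R != 0 ->
    wdeg 1 (-1) (phi L s R) = wdeg 1 (k%:Z - 1) R - (k * s)%N%:Z.
  by move=> MR nzR; apply: wdeg_phi => //; exact: dvdM.
split=> [minQ P nzP [R MR defP] | minphiQ P nzP MP].
  have nzR : R != 0 by rewrite -(phi_eq0 nzL (dvdM _ MR)) -defP.
  by rewrite defP !wdegM // lerD2r minQ.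
have nz_phiP : phi L s P != 0 by rewrite (phi_eq0 nzL (dvdM _ MP)).
have := minphiQ _ nz_phiP; rewrite !wdegM // lerD2r.
by apply; exists P.
Qed.
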